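(* Let $k$ be a field of characteristic zero, let $S=U(\mathfrak{sl}_2(k))$ be the enveloping algebra with standard basis $E,F,H$ of $\mathfrak{sl}_2(k)$ ($[H,E]=2E$, $[H,F]=-2F$, $[E,F]=H$), let $R=k[E]\subseteq S$ be the subalgebra generated by $E$, and let $f$ be the inclusion. Then the correspondence $\mathbf r\colon\operatorname{Spec} S\to\operatorname{Spec} R$ is not continuous; specifically, for $I=RE$, the set $\mathbf r^{[-1]}V_R(I)$ is not closed in $\operatorname{Spec} S$.
   Context: $\operatorname{Spec}$ carries the Zariski topology, closed sets $V_A(X)=\{P: P\supseteq X\}$. For $P\in\operatorname{Spec} S$, $\mathbf rP$ is the set of prime ideals of $R$ minimal over $P\cap R$; $\mathbf r^{[-1]}V=\{P\in\operatorname{Spec} S:\mathbf rP\subseteq V\}$; $\mathbf r$ is continuous if $\mathbf r^{[-1]}V$ is closed for all closed $V\subseteq\operatorname{Spec} R$. *)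

From mathcomp Require Import all_boot all_algebra.
Set Implicit Arguments. Unset Strict Implicit. Unset Printing Implicit Defensive.
Import GRing.Theory.
Local Open Scope ring_scope.

Definition sset (T : Type) := T -> Prop.
Definition ssub (T : Type) (X Y : sset T) := forall x, X x -> Y x.
Definition sall (T : Type) : sset T := fun _ => True.
Definition scap (T : Type) (X Y : sset T) : sset T := fun x => X x /\ Y x.

Section RingSpec.
Variable T : pzRingType.

(* Two-sided ideal of the subring with carrier A (A = sall T for the whole ring). *)
Definition ideal_in (A J : sset T) : Prop :=
  [/\ ssub J A, J 0,
      (forall x y, J x -> J y -> J (x - y)) &
      (forall a x, A a -> J x -> J (a * x) /\ J (x * a))].

Definition prime_in (A P : sset T) : Prop :=
  [/\ ideal_in A P, ~ ssub A P &
      forall I J, ideal_in A I -> ideal_in A J ->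
        (forall a b, I a -> J b -> P (a * b)) -> ssub I P \/ ssub J P].

Definition Vset (A X : sset T) : sset (sset T) :=
  fun P => prime_in A P /\ ssub X P.

Definition closed_in (A : sset T) (C : sset (sset T)) : Prop :=
  exists X, ssub X A /\ forall P, C P <-> Vset A X P.

(* Q ∈ r P : Q is a prime of the subring R minimal over P ∩ R. *)
Definition rcorr (R P Q : sset T) : Prop :=
  [/\ prime_in R Q, ssub (scap P R) Q &
      forall Q', prime_in R Q' -> ssub (scap P R) Q' -> ssub Q' Q -> ssub Q Q'].

(* r^{[-1]} V = { P ∈ Spec S : r P ⊆ V }, with S the whole ring T. *)
Definition rpre (R : sset T) (V : sset (sset T)) : sset (sset T) :=
  fun P => prime_in (@sall T) P /\ forall Q, rcorr R P Q -> V Q.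

Definition r_continuous (R : sset T) : Prop :=
  forall V, closed_in R V -> closed_in (@sall T) (rpre R V).

End RingSpec.

Definition gen_subalg (k : fieldType) (S : algType k) (a : S) : sset S :=
  fun x => exists p : {poly k}, x = horner_alg a p.

Definition sl2_rel (k : fieldType) (A : algType k) (e f h : A) : Prop :=
  [/\ h * e - e * h = e *+ 2, h * f - f * h = - (f *+ 2) & e * f - f * e = h].

Definition is_U_sl2 (k : fieldType) (S : algType k) (E F H : S) : Prop :=
  sl2_rel E F H /\
  forall (A : algType k) (e f h : A), sl2_rel e f h ->
    (exists phi : {lrmorphism S -> A}, [/\ phi E = e, phi F = f & phi H = h]) /\
    (forall phi psi : {lrmorphism S -> A},
       phi E = psi E -> phi F = psi F -> phi H = psi H -> forall x, phi x = psi x).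

From HB Require Import structures.
From mathcomp Require Import all_boot all_algebra.
From mathcomp Require Import boolp ring.
Set Implicit Arguments. Unset Strict Implicit. Unset Printing Implicit Defensive.
Import GRing.Theory.
Local Open Scope ring_scope.

(* Let λ be an indeterminate and M(λ) = k[λ][X] the universal Verma module,
   E X^j = j X^(j-1), F X^j = (λ - j) X^(j+1). The operators on M(λ) that, for
   every n, preserve L(n) = span(1, ..., X^n) at λ = n form a k-algebra
   receiving E, F, H, hence a morphism phi from U(sl_2). The annihilators P n
   of L(n) and Q of M(-1) are prime, because E and F move any nonzero vector of
   these modules back to any basis vector. E^(n+1) kills L(n), so every prime of
   k[E] over P n contains E: each P n lies in r^[-1] V(E). A closed set containing
   all P n contains Q, since a matrix entry of phi x vanishing at every λ = n
   vanishes identically. But E^d acts on M(-1) sending X^d to d! times its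
   leading coefficient, so Q meets k[E] in 0, and r Q = {0} is not in V(E). *)
Section LinX.
Variables (R : nzRingType) (V : lmodType R).

Definition linX (f : nat -> V) (p : {poly R}) : V := \sum_(l < size p) p`_l *: f l.

Lemma linX_widen (f : nat -> V) (p : {poly R}) n :
  (size p <= n)%N -> linX f p = \sum_(l < n) p`_l *: f l.
Proof.
move=> hn; rewrite /linX (big_ord_widen n (fun l => p`_l *: f l) hn).
rewrite big_mkcond /=; apply: eq_bigr => i _; case: ifP => // /negbT.
by rewrite -leqNgt => /(nth_default 0) ->; rewrite scale0r.
Qed.

Fact linX_is_linear (f : nat -> V) : linear (linX f).
Proof.
move=> a p q; set n := maxn (size p) (size q).
have le_pn : (size p <= n)%N := leq_maxl _ _.
have le_qn : (size q <= n)%N := leq_maxr _ _.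
have le_apqn : (size (a *: p + q)%R <= n)%N.
  by rewrite (leq_trans (size_polyD _ _)) // geq_max le_qn (leq_trans (size_scale_leq _ _)).
rewrite !(linX_widen f le_pn, linX_widen f le_qn, linX_widen f le_apqn).
rewrite scaler_sumr -big_split; apply: eq_bigr => i _.
by rewrite coefD coefZ scalerDl scalerA.
Qed.

HB.instance Definition _ (f : nat -> V) :=
  GRing.isLinear.Build R {poly R} V *:%R (linX f) (linX_is_linear f).

Lemma linXXn (f : nat -> V) m : linX f 'X^m = f m.
Proof.
rewrite /linX size_polyXn big_ord_recr /= coefXn eqxx scale1r big1 ?add0r //.
by move=> i _; rewrite coefXn ltn_eqF // scale0r.
Qed.

Lemma eq_linX (f g : nat -> V) (p : {poly R}) :
  (forall l, (l < size p)%N -> f l = g l) -> linX f p = linX g p.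
Proof. by move=> efg; apply: eq_bigr => i _; rewrite efg. Qed.

Lemma linX_fun0 (p : {poly R}) : linX (fun _ => 0) p = 0.
Proof. by rewrite /linX big1 // => i _; rewrite scaler0. Qed.

Lemma linX_funD (f g : nat -> V) (p : {poly R}) :
  linX (fun l => f l + g l) p = linX f p + linX g p.
Proof. by rewrite /linX -big_split; apply: eq_bigr => i _; rewrite scalerDr. Qed.

End LinX.

Lemma linX_funZ (R : comNzRingType) (V : lmodType R) (f : nat -> V) a p :
  linX (fun l => a *: f l) p = a *: linX f p.
Proof. by rewrite /linX scaler_sumr; apply: eq_bigr => i _; rewrite !scalerA mulrC. Qed.

Lemma linX_comp (R : nzRingType) (f g : nat -> {poly R}) p :
  linX f (linX g p) = linX (fun l => linX f (g l)) p.
Proof. by rewrite [linX g p]/linX linear_sum; apply: eq_bigr => i _; rewrite linearZ. Qed.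

Lemma linX_id (R : nzRingType) (p : {poly R}) : linX (fun l => 'X^l) p = p.
Proof. by rewrite /linX -poly_def coefK. Qed.

Section VermaOperators.
Variable k : fieldType.
Local Notation PP := {poly {poly k}}.

(* M j is the image of X^j, a polynomial in X over k[λ]; M is trunc_stable when
   its specialization at λ = n maps span(1, ..., X^n) into itself, for every n. *)
Definition trunc_stable (M : nat -> PP) := forall n i j, (j <= n)%N -> (n < i)%N ->
  ((M j)`_i).[n%:R] = 0.

Record vop := VOp { vcol : nat -> PP; vcolP : trunc_stable vcol }.

Lemma vopP (M N : vop) : (forall j, vcol M j = vcol N j) -> M = N.
Proof.
case: M N => [f fP] [g gP] /= /funext efg; subst g.
by congr VOp; exact: Prop_irrelevance.
Qed.

HB.instance Definition _ := gen_eqMixin vop.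
HB.instance Definition _ := gen_choiceMixin vop.

Fact trunc_stable0 : trunc_stable (fun _ => 0).
Proof. by move=> n i j _ _; rewrite coef0 horner0. Qed.

Fact trunc_stableD (M N : vop) : trunc_stable (fun j => vcol M j + vcol N j).
Proof. by move=> n i j le_jn lt_ni; rewrite coefD hornerD !vcolP ?addr0. Qed.

Fact trunc_stableN (M : vop) : trunc_stable (fun j => - vcol M j).
Proof. by move=> n i j le_jn lt_ni; rewrite coefN hornerN vcolP ?oppr0. Qed.

Fact trunc_stable1 : trunc_stable (fun j => 'X^j).
Proof.
move=> n i j le_jn lt_ni; rewrite coefXn; case: eqP => [eij|]; last by rewrite horner0.
by move: (leq_ltn_trans le_jn lt_ni); rewrite eij ltnn.
Qed.

Fact trunc_stableM (M N : vop) : trunc_stable (fun j => linX (vcol M) (vcol N j)).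
Proof.
move=> n i j le_jn lt_ni; rewrite /linX coef_sum horner_sum big1 // => l _.
rewrite coefZ hornerM; case: (leqP l n) => [le_ln|lt_nl].
  by rewrite (vcolP M le_ln lt_ni) mulr0.
by rewrite (vcolP N le_jn lt_nl) mul0r.
Qed.

Fact trunc_stableZ (a : k) (M : vop) : trunc_stable (fun j => a%:P *: vcol M j).
Proof. by move=> n i j le_jn lt_ni; rewrite coefZ hornerM vcolP ?mulr0. Qed.

Definition vop0 := VOp trunc_stable0.
Definition vop_add M N := VOp (trunc_stableD M N).
Definition vop_opp M := VOp (trunc_stableN M).
Definition vop1 := VOp trunc_stable1.
Definition vop_mul M N := VOp (trunc_stableM M N).
Definition vop_scale a M := VOp (trunc_stableZ a M).

Fact vop_addA : associative vop_add.
Proof. by move=> M N L; apply: vopP => j /=; rewrite addrA. Qed.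
Fact vop_addC : commutative vop_add.
Proof. by move=> M N; apply: vopP => j /=; rewrite addrC. Qed.
Fact vop_add0 : left_id vop0 vop_add.
Proof. by move=> M; apply: vopP => j /=; rewrite add0r. Qed.
Fact vop_addN : left_inverse vop0 vop_opp vop_add.
Proof. by move=> M; apply: vopP => j /=; rewrite addNr. Qed.

HB.instance Definition _ := GRing.isZmodule.Build vop vop_addA vop_addC vop_add0 vop_addN.

Fact vop_mulA : associative vop_mul.
Proof. by move=> M N L; apply: vopP => j /=; rewrite linX_comp. Qed.
Fact vop_mul1 : left_id vop1 vop_mul.
Proof. by move=> M; apply: vopP => j /=; rewrite linX_id. Qed.
Fact vop_mulr1 : right_id vop1 vop_mul.
Proof. by move=> M; apply: vopP => j /=; rewrite linXXn. Qed.
Fact vop_mulDl : left_distributive vop_mul vop_add.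
Proof. by move=> M N L; apply: vopP => j /=; rewrite linX_funD. Qed.
Fact vop_mulDr : right_distributive vop_mul vop_add.
Proof. by move=> M N L; apply: vopP => j /=; rewrite linearD. Qed.
Fact vop1_neq0 : vop1 != vop0.
Proof. by apply/eqP => /(congr1 (vcol^~ 0%N)) /= /eqP; rewrite expr0 oner_eq0. Qed.

HB.instance Definition _ :=
  GRing.Zmodule_isNzRing.Build vop vop_mulA vop_mul1 vop_mulr1 vop_mulDl vop_mulDr vop1_neq0.

Fact vop_scaleA a b M : vop_scale a (vop_scale b M) = vop_scale (a * b) M.
Proof. by apply: vopP => j /=; rewrite scalerA polyCM. Qed.
Fact vop_scale1 : left_id 1 vop_scale.
Proof. by move=> M; apply: vopP => j /=; rewrite scale1r. Qed.
Fact vop_scaleDr : right_distributive vop_scale +%R.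
Proof. by move=> a M N; apply: vopP => j /=; rewrite scalerDr. Qed.
Fact vop_scaleDl M : {morph vop_scale^~ M : a b / a + b}.
Proof. by move=> a b; apply: vopP => j /=; rewrite polyCD scalerDl. Qed.

HB.instance Definition _ :=
  GRing.Zmodule_isLmodule.Build k vop vop_scaleA vop_scale1 vop_scaleDr vop_scaleDl.

Fact vop_scaleAl (a : k) (M N : vop) : a *: (M * N) = (a *: M) * N.
Proof. by apply: vopP => j /=; rewrite linX_funZ. Qed.
HB.instance Definition _ := GRing.Lmodule_isLalgebra.Build k vop vop_scaleAl.

Fact vop_scaleAr (a : k) (M N : vop) : a *: (M * N) = M * (a *: N).
Proof. by apply: vopP => j /=; rewrite linearZ. Qed.
HB.instance Definition _ := GRing.Lalgebra_isAlgebra.Build k vop vop_scaleAr.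

Lemma vcolD (M N : vop) j : vcol (M + N) j = vcol M j + vcol N j. Proof. by []. Qed.
Lemma vcolN (M : vop) j : vcol (- M) j = - vcol M j. Proof. by []. Qed.
Lemma vcol0 j : vcol (0 : vop) j = 0. Proof. by []. Qed.
Lemma vcol1 j : vcol (1 : vop) j = 'X^j. Proof. by []. Qed.
Lemma vcolM (M N : vop) j : vcol (M * N) j = linX (vcol M) (vcol N j). Proof. by []. Qed.
Lemma vcolZ a (M : vop) j : vcol (a *: M) j = a%:P *: vcol M j. Proof. by []. Qed.

End VermaOperators.

Section Sl2Operators.
Variable k : fieldType.

(* The coefficient variable 'X : {poly k} plays λ:
   E X^j = j X^(j-1), F X^j = (λ - j) X^(j+1), H X^j = (λ - 2j) X^j. *)
Definition vE (j : nat) : {poly {poly k}} := (j%:R : {poly k}) *: 'X^(j.-1).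
Definition vF (j : nat) : {poly {poly k}} := ('X - (j%:R : {poly k})) *: 'X^(j.+1).
Definition vH (j : nat) : {poly {poly k}} := ('X - (j.*2%:R : {poly k})) *: 'X^j.

Fact trunc_stable_vE : trunc_stable vE.
Proof.
move=> n i j le_jn lt_ni; rewrite coefZ coefXn; case: eqP => [eij|]; last by rewrite mulr0 horner0.
move: (leq_ltn_trans le_jn lt_ni); rewrite eij.
by case: j {le_jn eij} => //= j; rewrite ltnNge leqnSn.
Qed.

(* At λ = n, F kills X^n: this is why span(1, ..., X^n) is stable. *)
Fact trunc_stable_vF : trunc_stable vF.
Proof.
move=> n i j le_jn lt_ni; rewrite coefZ coefXn; case: eqP => [eij|]; last by rewrite mulr0 horner0.
have -> : n = j by apply: anti_leq; rewrite le_jn -ltnS -eij lt_ni.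
by rewrite mulr1 !hornerE hornerMn hornerC subrr.
Qed.

Fact trunc_stable_vH : trunc_stable vH.
Proof.
move=> n i j le_jn lt_ni; rewrite coefZ coefXn; case: eqP => [eij|]; last by rewrite mulr0 horner0.
by move: (leq_ltn_trans le_jn lt_ni); rewrite eij ltnn.
Qed.

Definition opE : vop k := VOp trunc_stable_vE.
Definition opF : vop k := VOp trunc_stable_vF.
Definition opH : vop k := VOp trunc_stable_vH.

Lemma sl2_rel_op : sl2_rel opE opF opH.
Proof.
split; apply: vopP => j; rewrite ?mulr2n !(vcolD, vcolN, vcolM) /=;
  rewrite /vE /vF /vH !linearZ /= !linXXn !scalerN !scalerA.
- case: j => [|j]; first by rewrite mul0r mulr0 !scale0r subrr addr0.
  rewrite /= -scalerBl -scalerDl; congr (_ *: _).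
  by rewrite -!mul2n !natrM; ring.
- rewrite -scalerBl -scalerDl -scaleNr; congr (_ *: _).
  by rewrite -!mul2n !natrM; ring.
- case: j => [|j]; first by rewrite /= mul0r scale0r subr0 mulr1.
  rewrite /= -scalerBl; congr (_ *: _).
  by rewrite -!mul2n !natrM; ring.
Qed.

End Sl2Operators.

Section VermaAction.
Variables (k : fieldType) (c : k).

(* The action on the module M(c) obtained by specializing λ to c. *)
Definition spec_col (M : vop k) (j : nat) : {poly k} :=
  map_poly (horner_eval c) (vcol M j).

Definition vact (M : vop k) : {poly k} -> {poly k} := linX (spec_col M).

HB.instance Definition _ M := GRing.Linear.on (vact M).

Lemma spec_col_coef M j i : (spec_col M j)`_i = ((vcol M j)`_i).[c].
Proof. by rewrite coef_map. Qed.

Lemma spec_col0 j : spec_col 0 j = 0.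
Proof. by rewrite /spec_col vcol0 rmorph0. Qed.

Lemma spec_colB M N j : spec_col (M - N) j = spec_col M j - spec_col N j.
Proof. by rewrite /spec_col vcolD vcolN rmorphB. Qed.

Lemma vactXn M j : vact M 'X^j = spec_col M j.
Proof. exact: linXXn. Qed.

Lemma map_linX (f : nat -> {poly {poly k}}) p :
  map_poly (horner_eval c) (linX f p) =
  linX (fun l => map_poly (horner_eval c) (f l)) (map_poly (horner_eval c) p).
Proof.
rewrite [RHS](@linX_widen _ _ _ _ (size p)); last first.
  by apply/leq_sizeP => i le_pi; rewrite coef_map (nth_default 0 le_pi) raddf0.
rewrite /linX rmorph_sum; apply: eq_bigr => i _.
by rewrite -mul_polyC rmorphM /= map_polyC mul_polyC coef_map.
Qed.

Lemma spec_colM M N j : spec_col (M * N) j = vact M (spec_col N j).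
Proof. by rewrite /spec_col vcolM map_linX. Qed.

Lemma vactM M N v : vact (M * N) v = vact M (vact N v).
Proof.
by rewrite /vact linX_comp; apply: eq_linX => l _; rewrite spec_colM.
Qed.

Lemma vact1 v : vact 1 v = v.
Proof.
rewrite -[RHS]linX_id; apply: eq_linX => l _.
by rewrite /spec_col vcol1 map_polyXn.
Qed.

Lemma vactD M N v : vact (M + N) v = vact M v + vact N v.
Proof.
rewrite /vact -linX_funD; apply: eq_linX => l _.
by rewrite /spec_col vcolD rmorphD.
Qed.

Lemma vact0 v : vact 0 v = 0.
Proof. by rewrite -[RHS](linX_fun0 _ v); apply: eq_linX => l _; rewrite spec_col0. Qed.

Lemma vactZ a M v : vact (a *: M) v = a *: vact M v.
Proof.
rewrite /vact -linX_funZ; apply: eq_linX => l _.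
by rewrite /spec_col vcolZ map_polyZ /= horner_evalE hornerC.
Qed.

Lemma vact_sum I (r : seq I) (P : pred I) (G : I -> vop k) v :
  vact (\sum_(i <- r | P i) G i) v = \sum_(i <- r | P i) vact (G i) v.
Proof. exact: (big_morph (vact^~ v) (fun M N => vactD M N v) (vact0 v)). Qed.

Lemma vactE_Xn l : vact (opE k) 'X^l = l%:R *: 'X^(l.-1).
Proof. by rewrite vactXn /spec_col /= /vE map_polyZ map_polyXn /= rmorph_nat. Qed.

Lemma vactF_Xn l : vact (opF k) 'X^l = (c - l%:R) *: 'X^(l.+1).
Proof.
rewrite vactXn /spec_col /= /vF map_polyZ map_polyXn /= horner_evalE.
by rewrite hornerD hornerN hornerX hornerMn hornerC.
Qed.

Lemma vactEn_Xn m l : vact (opE k ^+ m) 'X^l = (l ^_ m)%:R *: 'X^(l - m).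
Proof.
elim: m => [|m IHm]; first by rewrite expr0 vact1 ffactn0 subn0 scale1r.
by rewrite exprS vactM IHm linearZ /= vactE_Xn scalerA -natrM ffactnSr subnS.
Qed.

Lemma vactFn_Xn m l : vact (opF k ^+ m) 'X^l =
  (\prod_(q < m) (c - (l + q)%:R)) *: 'X^(l + m).
Proof.
elim: m => [|m IHm]; first by rewrite expr0 vact1 big_ord0 addn0 scale1r.
by rewrite exprS vactM IHm linearZ /= vactF_Xn scalerA big_ord_recr /= addnS.
Qed.

Lemma vactEn_lead (v : {poly k}) :
  vact (opE k ^+ (size v).-1) v = (lead_coef v * ((size v).-1)`!%:R) *: 1.
Proof.
rewrite {1}/vact /linX lead_coefE; case sz_v: (size v) => [|d].
  by rewrite big_ord0 /= nth_default ?sz_v // mul0r scale0r.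
rewrite big_ord_recr /= big1 ?add0r.
  by rewrite -vactXn vactEn_Xn ffactnn subnn expr0 scalerA.
by move=> i _; rewrite -vactXn vactEn_Xn ffact_small ?scale0r ?scaler0 // ltn_ord.
Qed.

End VermaAction.

Section CharZero.
Variable k : fieldType.
Hypothesis k_char0 : [pchar k] =i pred0.

Lemma natf_neq0 n : (n%:R : k) != 0 <-> n != 0%N.
Proof. by rewrite (proj1 (pcharf0P k) k_char0). Qed.

Lemma natf_inj : injective (fun n : nat => (n%:R : k)).
Proof.
move=> m n /= e_mn; wlog le_mn : m n e_mn / (m <= n)%N.
  by move=> hw; case/orP: (leq_total m n) => ?; [exact: hw | exact/esym/hw].
apply/eqP; rewrite eqn_leq le_mn /= -subn_eq0.
by rewrite -(proj1 (pcharf0P k) k_char0 (n - m)%N) natrB // e_mn subrr.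
Qed.

Lemma fact_neq0 n : (n`!%:R : k) != 0.
Proof. by apply/natf_neq0; rewrite -lt0n fact_gt0. Qed.

Lemma poly_eq0_nat_roots (q : {poly k}) N : (forall m, q.[(N + m)%:R] = 0) -> q = 0.
Proof.
move=> q_root; apply: (@roots_geq_poly_eq0 _ q [seq (N + m)%:R | m <- iota 0 (size q)]).
- by apply/allP => x /mapP [m _ ->]; apply/eqP.
- by rewrite map_inj_uniq ?iota_uniq // => m1 m2 /natf_inj /addnI.
- by rewrite size_map size_iota.
Qed.

End CharZero.

Section Annihilators.
Variables (k : fieldType) (S : algType k) (E F : S) (phi : {lrmorphism S -> vop k}).
Hypotheses (phiE : phi E = opE k) (phiF : phi F = opF k) (k_char0 : [pchar k] =i pred0).

Definition ann (c : k) (B : pred nat) : sset S :=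
  fun x => forall j, B j -> spec_col c (phi x) j = 0.

Lemma vact_phiEn c m l : vact c (phi (E ^+ m)) 'X^l = (l ^_ m)%:R *: 'X^(l - m).
Proof. by rewrite rmorphXn /= phiE vactEn_Xn. Qed.

Lemma vact_phiFn c m l :
  vact c (phi (F ^+ m)) 'X^l = (\prod_(q < m) (c - (l + q)%:R)) *: 'X^(l + m).
Proof. by rewrite rmorphXn /= phiF vactFn_Xn. Qed.

(* span(X^j : j in B) is a submodule of M(c) on which F acts injectively. *)
Variables (c : k) (B : pred nat).
Hypotheses (B0 : B 0%N) (B_down : forall i j, B j -> (i <= j)%N -> B i).
Hypothesis B_stable : forall (M : vop k) j i, B j -> ~~ B i -> (spec_col c M j)`_i = 0.
Hypothesis F_injective : forall q, B q.+1 -> c - q%:R != 0.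

Lemma ideal_ann : ideal_in (@sall S) (ann c B).
Proof.
split=> //.
- by move=> j _; rewrite rmorph0 spec_col0.
- by move=> x y x_ann y_ann j Bj; rewrite rmorphB spec_colB x_ann ?y_ann ?subr0.
move=> a x _ x_ann; split=> j Bj; rewrite rmorphM spec_colM.
  by rewrite x_ann // linear0.
rewrite /vact /linX big1 // => l _.
by case Bl: (B l); [rewrite x_ann ?scaler0 | rewrite B_stable ?Bl ?scale0r].
Qed.

(* E^j then F^j0 carry X^j to X^j0, b carries it to v, E^(deg v) turns v into
   a nonzero constant, and F^j brings this back to X^j; no factor vanishes. *)
Lemma sandwich_Xn b j0 j : B j0 -> B j -> spec_col c (phi b) j0 != 0 ->
  exists s t : S, exists2 g : k, g != 0 & vact c (phi (s * b * t)) 'X^j = g *: 'X^j.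
Proof.
move=> Bj0 Bj; set v := spec_col c (phi b) j0 => v_neq0.
have F_prod_neq0 m : B m -> \prod_(q < m) (c - (0 + q)%:R) != 0.
  move=> Bm; rewrite prodf_seq_neq0; apply/allP => q _ /=.
  by rewrite add0n F_injective // (B_down Bm).
exists (F ^+ j * E ^+ (size v).-1), (F ^+ j0 * E ^+ j).
rewrite !rmorphM /= !vactM vact_phiEn subnn ffactnn linearZ /= vact_phiFn add0n.
rewrite !linearZ /= vactXn -/v [phi (E ^+ _)]rmorphXn /= phiE vactEn_lead !linearZ /=.
rewrite -(expr0 'X) vact_phiFn add0n !scalerA; eexists; last by [].
by rewrite !mulf_neq0 ?fact_neq0 ?F_prod_neq0 ?lead_coef_eq0.
Qed.

Lemma prime_ann : prime_in (@sall S) (ann c B).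
Proof.
split; first exact: ideal_ann.
  move=> ann_all; have /eqP := ann_all 1 Logic.I 0%N B0.
  by rewrite rmorph1 /spec_col vcol1 map_polyXn expr0 oner_eq0.
move=> I J I_ideal J_ideal IJ_ann.
case: (pselect (ssub J (ann c B))) => [|/existsNP [b /not_implyP [Jb]]]; first by right.
move=> /existsNP [j0 /not_implyP [Bj0 /eqP b_j0]]; left => a Ia j Bj.
have [s [t [g g_neq0 sbt_Xj]]] := sandwich_Xn Bj0 Bj b_j0.
have J_sbt : J (s * b * t).
  case: J_ideal => _ _ _ J_mul; have [J_sb _] := J_mul s b Logic.I Jb.
  by have [_] := J_mul t _ Logic.I J_sb.
have /eqP := IJ_ann a _ Ia J_sbt j Bj.
rewrite rmorphM spec_colM -vactXn sbt_Xj linearZ scaler_eq0 (negbTE g_neq0) /=.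
by rewrite vactXn => /eqP.
Qed.

End Annihilators.

Section GenSubalg.
Variables (k : fieldType) (S : algType k) (a : S).
Local Notation R := (gen_subalg a).

Lemma gen_subalg0 : R 0. Proof. by exists 0; rewrite raddf0. Qed.
Lemma gen_subalg1 : R 1. Proof. by exists 1; rewrite rmorph1. Qed.
Lemma gen_subalg_gen : R a. Proof. by exists 'X; rewrite horner_algX. Qed.

Lemma gen_subalgX m : R (a ^+ m).
Proof. by exists ('X ^+ m); rewrite rmorphXn /= horner_algX. Qed.

Lemma gen_subalgM x y : R x -> R y -> R (x * y).
Proof. by move=> [p ->] [q ->]; exists (p * q); rewrite rmorphM. Qed.

Lemma gen_subalgB x y : R x -> R y -> R (x - y).
Proof. by move=> [p ->] [q ->]; exists (p - q); rewrite rmorphB. Qed.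

Lemma gen_subalg_comm x y : R x -> R y -> x * y = y * x.
Proof. by move=> [p ->] [q ->]; rewrite -!rmorphM mulrC. Qed.

Lemma ideal_gen_subalg_principal y :
  R y -> ideal_in R (fun x => exists r, R r /\ x = r * y).
Proof.
move=> Ry; split.
- by move=> _ [r [Rr ->]]; exact: gen_subalgM.
- by exists 0; split; [exact: gen_subalg0 | rewrite mul0r].
- move=> _ _ [r [Rr ->]] [s [Rs ->]]; exists (r - s).
  by split; [exact: gen_subalgB | rewrite mulrBl].
move=> b _ Rb [r [Rr ->]]; split.
  by exists (b * r); split; [exact: gen_subalgM | rewrite mulrA].
by exists (r * b); split; [exact: gen_subalgM | rewrite -!mulrA (gen_subalg_comm Ry Rb)].
Qed.

Lemma prime_gen_subalg_pow (Q : sset S) m : prime_in R Q -> Q (a ^+ m.+1) -> Q a.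
Proof.
move=> Q_prime; elim: m => [|m IHm]; first by rewrite expr1.
case: (Q_prime) => [[_ _ _ Q_mul] _ Q_split] Q_am.
have mem_principal y : R y -> (fun x => exists r, R r /\ x = r * y) y.
  by exists 1; split; [exact: gen_subalg1 | rewrite mul1r].
have := Q_split _ _ (ideal_gen_subalg_principal gen_subalg_gen)
                    (ideal_gen_subalg_principal (gen_subalgX m.+1)).
case=> [_ _ [r [Rr ->]] [s [Rs ->]]| /(_ a) | /(_ (a ^+ m.+1)) ].
- rewrite -mulrA (mulrA a) (gen_subalg_comm gen_subalg_gen Rs) -mulrA -exprS mulrA.
  exact: (proj1 (Q_mul _ _ (gen_subalgM Rr Rs) Q_am)).
- by apply; apply: mem_principal; exact: gen_subalg_gen.
- by move=> Q_am1; apply: IHm; apply: Q_am1; apply: mem_principal; exact: gen_subalgX.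
Qed.

End GenSubalg.

Section Sl2Spectrum.
Variables (k : fieldType) (S : algType k) (E F : S) (phi : {lrmorphism S -> vop k}).
Hypotheses (phiE : phi E = opE k) (phiF : phi F = opF k) (k_char0 : [pchar k] =i pred0).

Local Notation R := (gen_subalg E).
Local Notation I := (fun x => exists r, R r /\ x = r * E).
Local Notation ann := (ann phi).
(* Q annihilates the simple Verma module M(-1), P n the simple module L(n)
   of dimension n + 1. *)
Local Notation Q := (ann (-1) predT).
Local Notation P n := (ann n%:R (fun j => (j <= n)%N)).

Lemma prime_Q : prime_in (@sall S) Q.
Proof.
apply: (prime_ann phiE phiF k_char0) => // q _.
by rewrite -opprD oppr_eq0 nat1r natf_neq0.
Qed.

Lemma prime_P n : prime_in (@sall S) (P n).
Proof.
apply: (prime_ann phiE phiF k_char0) => //.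
- by move=> i j le_jn le_ij; exact: leq_trans le_ij le_jn.
- by move=> M j i le_jn lt_ni; rewrite spec_col_coef vcolP // ltnNge.
- by move=> q lt_qn; rewrite -natrB ?(ltnW lt_qn) // natf_neq0 // subn_eq0 -ltnNge.
Qed.

Lemma P_Epow n : P n (E ^+ n.+1).
Proof. by move=> j le_jn; rewrite -vactXn vact_phiEn // ffact_small ?scale0r. Qed.

Lemma vact_horner_alg c p v :
  vact c (phi (horner_alg E p)) v = \sum_(i < size p) p`_i *: vact c (phi (E ^+ i)) v.
Proof.
rewrite -[p in horner_alg _ p]coefK poly_def rmorph_sum rmorph_sum vact_sum /=.
apply: eq_bigr => i _; rewrite -mul_polyC rmorphM /= horner_algC rmorphXn /=.
by rewrite horner_algX mulr_algl linearZ vactZ.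
Qed.

Lemma ann_horner_alg_eq0 c p : ann c predT (horner_alg E p) -> p = 0.
Proof.
move=> p_ann; apply/eqP; apply: contraT => p_neq0; move: (p_ann (size p).-1 isT).
rewrite -vactXn vact_horner_alg => /(congr1 (fun w : {poly k} => w`_0)).
have sz_p : size p = ((size p).-1).+1 by rewrite prednK // size_poly_gt0.
rewrite coef_sum coef0 sz_p big_ord_recr /= big1 => [|i _]; last first.
  by rewrite vact_phiEn // !coefZ coefXn eq_sym subn_eq0 leqNgt ltn_ord !mulr0.
rewrite add0r vact_phiEn // ffactnn subnn !coefZ coefXn eqxx mulr1 => /eqP.
by rewrite mulf_eq0 (negbTE (fact_neq0 k_char0 _)) orbF -lead_coefE lead_coef_eq0 (negbTE p_neq0).
Qed.

Lemma horner_alg_eq0 p : horner_alg E p = 0 -> p = 0.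
Proof.
by move=> p0; apply: (ann_horner_alg_eq0 (c := 0)); rewrite p0 => j _; rewrite rmorph0 spec_col0.
Qed.

Lemma E_neq0 : E <> 0.
Proof.
move=> E0; have /eqP : ('X : {poly k}) = 0 by apply: horner_alg_eq0; rewrite horner_algX.
by rewrite polyX_eq0.
Qed.

Lemma gen_subalg_mul_eq0 x y : R x -> R y -> x * y = 0 -> x = 0 \/ y = 0.
Proof.
move=> [p ->] [q ->]; rewrite -rmorphM => /horner_alg_eq0 /eqP.
by rewrite mulf_eq0 => /orP [] /eqP ->; [left | right]; rewrite rmorph0.
Qed.

Lemma prime_gen_subalg0 : prime_in R (fun x => x = 0).
Proof.
split.
- split=> [_ ->| | _ _ -> ->| b _ _ ->]; rewrite ?mulr0 ?mul0r ?subrr //.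
  exact: gen_subalg0.
- by move=> R0; apply: E_neq0; exact: R0 _ (gen_subalg_gen E).
move=> J1 J2 [J1_sub _ _ _] [J2_sub _ _ _] J12_0.
case: (pselect (ssub J1 (fun x => x = 0))) => [|/existsNP [x /not_implyP [J1x x_neq0]]].
  by left.
right=> y J2y; have [|//] := gen_subalg_mul_eq0 (J1_sub x J1x) (J2_sub y J2y) (J12_0 x y J1x J2y).
by move/x_neq0.
Qed.

Lemma rcorr_Q_0 : rcorr R Q (fun x => x = 0).
Proof.
split; first exact: prime_gen_subalg0.
  by move=> x [Qx [p x_p]]; move: Qx; rewrite x_p => /ann_horner_alg_eq0 ->; rewrite rmorph0.
by move=> Q' [[_ Q'0 _ _] _ _] _ _ _ ->.
Qed.

Lemma rpre_P n : rpre R (Vset R I) (P n).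
Proof.
split; first exact: prime_P.
move=> Q' [Q'_prime PR_Q' _]; split => //.
have Q'E : Q' E.
  apply: (prime_gen_subalg_pow Q'_prime (m := n)); apply: PR_Q'.
  by split; [exact: P_Epow | exact: gen_subalgX].
case: Q'_prime => [[_ _ _ Q'_mul] _ _] _ [r [Rr ->]].
exact: (proj1 (Q'_mul r E Rr Q'E)).
Qed.

Lemma closed_P_Q X : (forall n, ssub X (P n)) -> ssub X Q.
Proof.
move=> XP x Xx j _; apply/polyP => i; rewrite coef0 spec_col_coef.
suff -> : (vcol (phi x) j)`_i = 0 by rewrite horner0.
apply: (poly_eq0_nat_roots k_char0 (N := j)) => m.
have /(congr1 (fun w : {poly k} => w`_i)) := XP _ x Xx j (leq_addr m j).
by rewrite spec_col_coef coef0.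
Qed.

Lemma rpre_VI_not_closed : ~ closed_in (@sall S) (rpre R (Vset R I)).
Proof.
move=> [X [_ VX]].
have XQ : ssub X Q by apply: closed_P_Q => n; exact: (proj2 (proj1 (VX _) (rpre_P n))).
have [_ Q_rpre] := proj2 (VX Q) (conj prime_Q XQ).
have [_ I0] := Q_rpre _ rcorr_Q_0.
by apply: E_neq0; apply: I0; exists 1; split; [exact: gen_subalg1 | rewrite mul1r].
Qed.

End Sl2Spectrum.

Theorem mainTheorem5 (k : fieldType) (S : algType k) (E F H : S) :
  [pchar k] =i pred0 ->
  is_U_sl2 E F H ->
  let R := gen_subalg E in
  let I : sset S := fun x => exists r, R r /\ x = r * E in
  ~ r_continuous R /\ ~ closed_in (@sall S) (rpre R (Vset R I)).
Proof.
move=> k_char0 [_ U_univ] R I.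
have [[phi [phiE phiF _]] _] := U_univ _ _ _ _ (sl2_rel_op k).
have not_closed := rpre_VI_not_closed phiE phiF k_char0.
split=> // R_cont; apply/not_closed/R_cont.
exists I; split=> // _ [r [Rr ->]].
exact: gen_subalgM Rr (gen_subalg_gen E).
Qed.
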